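(* Let $G$ be a graph on $n$ vertices with maximum degree $d$ and let $\lambda>0$ with $\lambda\le\frac{1}{2\sqrt e\,d-1}$. Consider the algorithm: mark each vertex occupied independently with probability $\frac{\lambda}{1+\lambda}$; while there is at least one edge with both endpoints occupied, let $B$ be the set of vertices lying in connected components of size at least $2$ of the subgraph induced by the occupied vertices, and independently re-mark each vertex of $B\cup\partial B$ occupied with probability $\frac{\lambda}{1+\lambda}$; output the set of occupied vertices. Then the output is an independent set $I$ of $G$ drawn with probability proportional to $\lambda^{|I|}$, and the algorithm runs in expected $O(n)$ time.
   Context: $\partial B$ denotes the set of vertices not in $B$ that are adjacent to some vertex of $B$. *)

From HB Require Import structures.
From mathcomp Require Import all_boot all_order all_algebra.
From mathcomp Require Import all_classical all_reals all_analysis.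
Set Implicit Arguments. Unset Strict Implicit. Unset Printing Implicit Defensive.
Import Order.TTheory GRing.Theory Num.Theory.
Local Open Scope ring_scope.

Definition simple_graph (T : finType) (e : rel T) : Prop :=
  symmetric e /\ irreflexive e.

Definition max_degree (T : finType) (e : rel T) : nat :=
  (\max_(v : T) #|[set u | e v u]|)%N.

Definition indep (T : finType) (e : rel T) (S : {set T}) : bool :=
  [forall x in S, forall y in S, ~~ e x y].

Definition induced_rel (T : finType) (e : rel T) (S : {set T}) : rel T :=
  [rel x y | [&& e x y, x \in S & y \in S]].

Definition badset (T : finType) (e : rel T) (S : {set T}) : {set T} :=
  [set v in S | (2 <= #|[set u | connect (induced_rel e S) v u]|)%N].

Definition vboundary (T : finType) (e : rel T) (B : {set T}) : {set T} :=
  [set u | (u \notin B) && [exists w in B, e w u]].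

Definition resample_set (T : finType) (e : rel T) (S : {set T}) : {set T} :=
  badset e S :|: vboundary e (badset e S).

Section PRS.
Variables (R : realType) (T : finType) (e : rel T) (lam : R).

Definition occ_prob : R := lam / (1 + lam).

Definition init_dist (S : {set T}) : R :=
  occ_prob ^+ #|S| * (1 - occ_prob) ^+ #|~: S|.

(* one round of the algorithm as a Markov kernel; independent (final)
   states are absorbing *)
Definition prs_step (S S' : {set T}) : R :=
  if indep e S then (S' == S)%:R
  else let Rs := resample_set e S in
       if [forall v in ~: Rs, (v \in S') == (v \in S)]
       then occ_prob ^+ #|S' :&: Rs| * (1 - occ_prob) ^+ #|Rs :\: S'|
       else 0.

Fixpoint prs_dist (t : nat) : {set T} -> R :=
  match t with
  | 0%N => init_dist
  | t'.+1 => fun S' => \sum_(S : {set T}) prs_dist t' S * prs_step S S'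
  end.

Definition hardcore_Z : R := \sum_(I : {set T} | indep e I) lam ^+ #|I|.

Definition round_cost (S : {set T}) : nat :=
  if indep e S then 0%N else #|resample_set e S|.

Definition expected_cost (t : nat) : R :=
  #|T|%:R + \sum_(i < t) \sum_(S : {set T}) prs_dist i S * (round_cost S)%:R.

End PRS.

From HB Require Import structures.
From mathcomp Require Import all_boot all_order all_algebra.
From mathcomp Require Import all_classical all_reals all_analysis.
From mathcomp Require Import ring lra.
From mathcomp Require Import fintype finset.
Set Implicit Arguments. Unset Strict Implicit. Unset Printing Implicit Defensive.
Import Order.TTheory GRing.Theory Num.Theory.
Import numFieldNormedType.Exports.
Local Open Scope ring_scope.

(* A vertex of an occupied set S is bad if it has an occupied neighbour; the
   bad vertices form exactly the set B(S) of the algorithm.  Let mu be the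
   product Bernoulli(p) law with p = lambda/(1+lambda).  By induction on the
   rounds, the law of the state after t rounds has the form S |-> mu(S) psi_t(B(S)):
   given B = B(S) and the state S' after a round, the state before it must be
   B \cup (S' \ (B \cup \partial B)), and whether this set has bad set B depends on
   S' only through B(S').  Independent sets have no bad vertex, so they all
   carry the same factor psi_t(empty) and the law restricted to them is
   proportional to mu, i.e. to lambda^|I|.
   For the running time, every occupied edge after a round touches the
   resampled set B \cup \partial B, of size at most (d+1)|B|, and conditionally on
   B(S) = B a vertex outside B is occupied with probability at most p.  Hence
   the expected number of bad vertices shrinks by a factor 2d(d+1)p^2 <= 1/2 in
   each round, which bounds both the mass outside the independent sets and the
   total work. *)

Section BigIndicators.
Variable R : comPzSemiRingType.

Lemma prodr_indicator (I : finType) (P Q : pred I) :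
  \prod_(i | P i) (Q i)%:R = [forall (i | P i), Q i]%:R :> R.
Proof.
have [allQ|] := boolP [forall (i | P i), Q i].
  by rewrite big1 // => i Pi; rewrite (forall_inP allQ).
rewrite negb_forall_in => /exists_inP [i Pi nQi].
by rewrite (bigD1 i) //= (negbTE nQi) mul0r.
Qed.

Lemma sum_fiber_eq (I J : finType) (f : I -> J) (h : J -> I) (F : J -> R) :
  \sum_i F (f i) * (i == h (f i))%:R = \sum_j F j * (f (h j) == j)%:R.
Proof.
rewrite (partition_big f predT) //=; apply: eq_bigr => j _.
rewrite (eq_bigr (fun i => F j * (i == h j)%:R)) => [|i /eqP <- //].
rewrite -big_distrr /=; congr (_ * _).
have [fhj|nfhj] := eqVneq (f (h j)) j.
  by rewrite (bigD1 (h j)) ?fhj //= eqxx big1 ?addr0 // => i /andP [_ /negbTE ->].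
rewrite big1 // => i /eqP fi; have [ihj|//] := eqVneq i (h j).
by case/eqP: nfhj; rewrite -ihj fi.
Qed.

End BigIndicators.

Section Conflicts.
Variables (T : finType) (e : rel T).
Hypotheses (e_sym : symmetric e) (e_irr : irreflexive e).

Definition nonisolated (S : {set T}) : {set T} :=
  [set v in S | [exists u in S, e v u]].

Definition cnbhd (A : {set T}) : {set T} := A :|: vboundary e A.

(* The state before a round, recovered from its bad set A and the state S after it. *)
Definition rewind (A S : {set T}) : {set T} := A :|: (S :\: cnbhd A).

Lemma indep_nonisolated S : indep e S = (nonisolated S == set0).
Proof.
apply/forall_inP/eqP => [indS|/setP noconf v vS].
  apply/setP => v; rewrite !inE; apply/negbTE/andP => -[vS /exists_inP [u uS evu]].
  by move: (indS v vS) => /forall_inP /(_ u uS); rewrite evu.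
apply/forall_inP => u uS; apply/negP => evu.
by move: (noconf v); rewrite !inE vS /= => /negbT/exists_inP; apply; exists u.
Qed.

Lemma badset_nonisolated S : badset e S = nonisolated S.
Proof.
apply/setP => v; rewrite !inE; case vS: (v \in S) => //=.
apply/idP/exists_inP => [|[u uS evu]].
  case/card_gt1P => x [y [xi yi xy]].
  have [u vu uv] : exists2 u, connect (induced_rel e S) v u & u != v.
    rewrite !inE in xi yi.
    by have [xv|] := eqVneq x v; [exists y; rewrite // -xv eq_sym | exists x].
  case/connectP: vu uv => [[|x1 p]] /= pth lst; first by rewrite lst eqxx.
  by case/andP: pth => /and3P [evx _ x1S] _ _; exists x1.
apply/card_gt1P; exists v, u; rewrite !inE connect0; split => //.
  by apply: connect1; rewrite /induced_rel /= evu vS uS.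
by apply: contraTneq evu => <-; rewrite e_irr.
Qed.

Lemma resample_setE S : resample_set e S = cnbhd (nonisolated S).
Proof. by rewrite /resample_set badset_nonisolated. Qed.

Lemma cnbhd0 : cnbhd set0 = set0.
Proof. by apply/setP => v; rewrite !inE; apply/exists_inP => -[w]; rewrite inE. Qed.

Lemma setI_cnbhd_nonisolated S : S :&: cnbhd (nonisolated S) = nonisolated S.
Proof.
apply/setP => v; rewrite !inE; case vS: (v \in S) => //=.
case: (boolP [exists u in S, e v u]) => //= isolated.
apply/negbTE/exists_inP => -[w]; rewrite inE => /andP [wS _] ewv.
by case/exists_inP: isolated; exists w; rewrite // e_sym.
Qed.

Lemma nonisolatedU (A X : {set T}) : [disjoint X & cnbhd A] ->
  nonisolated (A :|: X) = nonisolated A :|: nonisolated X.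
Proof.
move=> dis; have farX x : x \in X -> x \notin A /\ ~~ [exists w in A, e w x].
  by move=> xX; have := disjointFr dis xX; rewrite !inE; case: (x \in A) => //= ->.
apply/setP => v; rewrite !inE.
case vA: (v \in A) => /=.
  have -> : (v \in X) = false by apply/negbTE/negP => /farX []; rewrite vA.
  rewrite andFb orbF; apply/exists_inP/exists_inP => -[u]; last first.
    by move=> uA evu; exists u; rewrite ?inE ?uA.
  rewrite inE => /orP [uA|uX] evu; first by exists u.
  by case: (farX u uX) => _ /exists_inP []; exists v.
case vX: (v \in X) => //=; apply/exists_inP/exists_inP => -[u]; last first.
  by move=> uX evu; exists u; rewrite ?inE ?uX ?orbT.
rewrite inE => /orP [uA|uX] evu; last by exists u.
by case: (farX v vX) => _ /exists_inP []; exists u; rewrite // e_sym.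
Qed.

Lemma nonisolatedD S Z : nonisolated (S :\: Z) = nonisolated (nonisolated S :\: Z).
Proof.
apply/setP => v; rewrite !inE; case: (v \in Z) => //=; case vS: (v \in S) => //=.
apply/exists_inP/andP => [[u]|[_ /exists_inP [u]]].
  rewrite !inE => /andP [uZ uS] evu; split; first by apply/exists_inP; exists u.
  apply/exists_inP; exists u; rewrite // !inE uZ uS /=.
  by apply/exists_inP; exists v; rewrite // e_sym.
by rewrite !inE => /andP [uZ /andP [uS _]] evu; exists u; rewrite // !inE uZ uS.
Qed.

Lemma nonisolated_rewind A S :
  nonisolated (rewind A S) = nonisolated (rewind A (nonisolated S)).
Proof.
have dis Y : [disjoint Y :\: cnbhd A & cnbhd A] by rewrite disjoints_subset subsetDr.
by rewrite /rewind !nonisolatedU // nonisolatedD.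
Qed.

Lemma nonisolatedU1 u S : u \notin nonisolated (u |: S) ->
  nonisolated S = nonisolated (u |: S).
Proof.
rewrite in_set setU11 /= => /exists_inP isolated.
apply/setP => v; rewrite !in_set.
have [->|vu] := eqVneq v u.
  rewrite [X in _ = _ && X](introF exists_inP isolated) andbF.
  apply/negbTE/andP => -[_ /exists_inP [x xS eux]].
  by apply: isolated; exists x; rewrite ?setU1r.
rewrite in_set1 (negbTE vu) /=; case vS: (v \in S) => //=.
apply/exists_inP/exists_inP => -[x]; first by exists x; rewrite ?setU1r.
case/setU1P => [->|xS] evx; last by exists x.
by case: isolated; exists v; rewrite ?setU1r // e_sym.
Qed.

Local Notation d := (max_degree e).

Definition degree v := #|[set u | e v u]|.

Lemma degree_le_max v : (degree v <= d)%N.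
Proof. exact: leq_bigmax. Qed.

Lemma sum_adj v : (\sum_u e v u)%N = degree v.
Proof. by rewrite /degree -sum1_card [RHS]big_mkcond /=; apply: eq_bigr => u _; rewrite inE. Qed.

Lemma card_cnbhd B : (#|cnbhd B| <= d.+1 * #|B|)%N.
Proof.
rewrite /cnbhd mulSn (leq_trans (leq_card_setU _ _)) // leq_add2l.
apply: (@leq_trans (\sum_u \sum_(w in B) e w u)%N).
  rewrite -sum1_card big_mkcond /=; apply: leq_sum => u _.
  case: ifP => //; rewrite inE => /andP [_ /exists_inP [w wB ewu]].
  by rewrite (bigD1 w) //= ewu.
rewrite exchange_big /= mulnC -sum_nat_const; apply: leq_sum => w _.
by rewrite sum_adj degree_le_max.
Qed.

Lemma card_pairs_touching (X : {set T}) :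
  (\sum_v \sum_u (e v u && ((v \in X) || (u \in X))) <= 2 * d * #|X|)%N.
Proof.
have half : (\sum_v \sum_u (e v u && (v \in X)) <= d * #|X|)%N.
  rewrite mulnC -sum_nat_const [X in (_ <= X)%N]big_mkcond /=; apply: leq_sum => v _.
  case: (v \in X); last by rewrite big1 // => u _; rewrite andbF.
  by under eq_bigr do rewrite andbT; rewrite sum_adj degree_le_max.
apply: (@leq_trans (\sum_v \sum_u ((e v u && (v \in X)) + (e v u && (u \in X))))%N).
  apply: leq_sum => v _; apply: leq_sum => u _.
  by case: (e v u); case: (v \in X); case: (u \in X).
under eq_bigr do rewrite big_split /=.
rewrite big_split /= -mulnA mul2n -addnn leq_add // exchange_big /=.
by under eq_bigr do under eq_bigr do rewrite e_sym.
Qed.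

Lemma card_nonisolated_touching (X S S' : {set T}) : nonisolated S \subset X ->
  (forall i, i \notin X -> (i \in S') = (i \in S)) ->
  (#|nonisolated S'| <=
     \sum_v \sum_u [&& e v u, (v \in X) || (u \in X), v \in S' & u \in S'])%N.
Proof.
move=> BX agree; rewrite -sum1_card big_mkcond /=; apply: leq_sum => v _.
case: ifP => //; rewrite inE => /andP [vS' /exists_inP [u uS' evu]].
have touch : (v \in X) || (u \in X).
  apply: contraT => /norP [vX uX].
  have vB : v \in nonisolated S.
    by rewrite inE -(agree v vX) vS'; apply/exists_inP; exists u; rewrite // -(agree u uX).
  by rewrite (subsetP BX v vB) in vX.
by rewrite (bigD1 u) //= evu touch vS' uS'.
Qed.

End Conflicts.

Section ProductBernoulli.
Variables (R : realFieldType) (T : finType) (p : R).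
Hypotheses (p_ge0 : 0 <= p) (p_le1 : p <= 1).

Definition bern_pmf (b : bool) : R := if b then p else 1 - p.

Definition bern (S : {set T}) : R := \prod_i bern_pmf (i \in S).

Definition bern_on (X S : {set T}) : R := \prod_(i in X) bern_pmf (i \in S).

Definition resample (X S S' : {set T}) : R :=
  \prod_i if i \in X then bern_pmf (i \in S') else ((i \in S') == (i \in S))%:R.

Definition occ_marginal (X S : {set T}) (i : T) : R :=
  if i \in X then p else (i \in S)%:R.

Lemma bern_pmf_ge0 b : 0 <= bern_pmf b.
Proof. by case: b => /=; rewrite ?subr_ge0. Qed.

Lemma bern_ge0 (S : {set T}) : 0 <= bern S.
Proof. by apply: prodr_ge0 => i _; apply: bern_pmf_ge0. Qed.

Lemma resample_ge0 (X S S' : {set T}) : 0 <= resample X S S'.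
Proof. by apply: prodr_ge0 => i _; case: ifP => _; rewrite ?bern_pmf_ge0 ?ler0n. Qed.

Lemma prod_bern_pmf (P : pred T) (S : {set T}) :
  \prod_(i | P i) bern_pmf (i \in S) =
  p ^+ #|[set i | P i && (i \in S)]| * (1 - p) ^+ #|[set i | P i && (i \notin S)]|.
Proof.
rewrite (bigID (mem S)) /= (eq_bigr (fun=> p)) => [|i /andP [_ ->] //].
rewrite [X in _ * X](eq_bigr (fun=> 1 - p)) => [|i /andP [_ /negbTE ->] //].
by rewrite !prodr_const; congr (_ ^+ _ * _ ^+ _); apply: eq_card => i; rewrite !inE.
Qed.

Lemma bernE (S : {set T}) : bern S = p ^+ #|S| * (1 - p) ^+ #|~: S|.
Proof.
by rewrite /bern prod_bern_pmf; congr (_ ^+ _ * _ ^+ _); apply: eq_card => i; rewrite !inE.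
Qed.

Lemma resampleE (X S S' : {set T}) : resample X S S' =
  if [forall v in ~: X, (v \in S') == (v \in S)]
  then p ^+ #|S' :&: X| * (1 - p) ^+ #|X :\: S'| else 0.
Proof.
rewrite /resample (bigID (mem X)) /= (eq_bigr (fun i => bern_pmf (i \in S'))) => [|i ->] //.
rewrite [X in _ * X](eq_bigr (fun i => ((i \in S') == (i \in S))%:R)) => [|i /negbTE ->] //.
rewrite prod_bern_pmf prodr_indicator.
rewrite (eq_forallb (P2 := fun v => (v \in ~: X) ==> ((v \in S') == (v \in S)))) => [|i];
  last by rewrite inE.
case: ifP => _; last by rewrite mulr0.
by rewrite mulr1; congr (_ ^+ _ * _ ^+ _); apply: eq_card => i; rewrite !inE andbC.
Qed.

Lemma resample0 (S S' : {set T}) : resample set0 S S' = (S' == S)%:R.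
Proof.
rewrite /resample (eq_bigr (fun i => ((i \in S') == (i \in S))%:R)) => [|i _];
  last by rewrite inE.
rewrite prodr_indicator; congr (nat_of_bool _)%:R.
by apply/forallP/eqP => [same|-> i]; [apply/setP => i; apply/eqP/same | rewrite eqxx].
Qed.

Lemma resampleT (S S' : {set T}) : resample setT S S' = bern S'.
Proof. by apply: eq_bigr => i _; rewrite in_setT. Qed.

Lemma resample_eq0 (X S S' : {set T}) i :
  i \notin X -> (i \in S') != (i \in S) -> resample X S S' = 0.
Proof. by move=> iX iS; rewrite /resample (bigD1 i) //= (negbTE iX) (negbTE iS) mul0r. Qed.

Lemma resample_occupied (X S A : {set T}) :
  \sum_S' resample X S S' * (A \subset S')%:R = \prod_(i in A) occ_marginal X S i.
Proof.
pose g i := if i \in A then 0 else 1 - occ_marginal X S i.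
transitivity (\prod_i (occ_marginal X S i + g i)); last first.
  rewrite [RHS]big_mkcond; apply: eq_bigr => i _.
  by rewrite /g; case: ifP => _; rewrite ?addr0 // addrC subrK.
rewrite bigA_distr; apply: eq_bigr => S' _.
have -> : (A \subset S') = [forall (i | i \in A), i \in S'] by apply/subsetP/forall_inP.
rewrite -prodr_indicator big_mkcond -big_split /=; apply: eq_bigr => i _.
rewrite /g /occ_marginal /bern_pmf.
by case: (i \in A); case: (i \in S'); case: (i \in X); case: (i \in S);
  rewrite /= ?mulr1 ?mulr0 ?subrr ?subr0.
Qed.

Lemma resample_sum1 (X S : {set T}) : \sum_S' resample X S S' = 1.
Proof.
move: (resample_occupied X S set0); rewrite big_set0 => <-.
by apply: eq_bigr => S' _; rewrite sub0set mulr1.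
Qed.

Lemma resample_pair (X S : {set T}) v u : v != u ->
  \sum_S' resample X S S' * ((v \in S') && (u \in S'))%:R =
  occ_marginal X S v * occ_marginal X S u.
Proof.
move=> vu; move: (resample_occupied X S [set v; u]).
rewrite big_setU1 ?inE // big_set1 => <-.
by apply: eq_bigr => S' _; rewrite subUset !sub1set.
Qed.

Lemma bern_resample (X S S' : {set T}) :
  bern S * resample X S S' =
  bern S' * bern_on X (S :&: X) * (S == (S :&: X) :|: (S' :\: X))%:R.
Proof.
have -> : (S == (S :&: X) :|: (S' :\: X)) =
          [forall (i | i \notin X), (i \in S') == (i \in S)].
  apply/eqP/forall_inP => [/setP same i iX|same].
    by rewrite [in X in _ == X]same !inE (negbTE iX) andbF.
  apply/setP => i; rewrite !inE; case: (boolP (i \in X)) => iX /=.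
    by rewrite andbT orbF.
  by rewrite andbF (eqP (same i iX)).
rewrite /bern /resample /bern_on -prodr_indicator.
rewrite (big_mkcond (fun i => i \in X)) (big_mkcond (fun i => i \notin X)) -!big_split /=.
apply: eq_bigr => i _; rewrite inE /bern_pmf.
by case: (i \in X); case: (i \in S); case: (i \in S');
  rewrite /= ?mulr1 ?mulr0 ?mul1r ?mul0r // mulrC.
Qed.

Lemma bern_setU1 u (S : {set T}) : u \notin S -> bern (u |: S) * (1 - p) = bern S * p.
Proof.
move=> uS; rewrite /bern (bigD1 u) //= [in RHS](bigD1 u) //= setU11 (negbTE uS).
rewrite (eq_bigr (fun i => bern_pmf (i \in S))) => [|i /negbTE iu]; last by rewrite in_setU1 iu.
by rewrite /=; ring.
Qed.

Lemma bern_occupied_le (F : pred {set T}) (u : T) :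
  (forall S : {set T}, u \notin S -> F (u |: S) -> F S) ->
  \sum_(S | F S) bern S * (u \in S)%:R <= p * \sum_(S | F S) bern S.
Proof.
move=> F_del; set occ := \sum_(S | F S) _; set vac := \sum_(S | F S) bern S * (u \notin S)%:R.
have -> : \sum_(S | F S) bern S = occ + vac.
  rewrite -big_split; apply: eq_bigr => S _.
  by case: (u \in S); rewrite /= ?mulr1 ?mulr0 ?addr0 ?add0r.
suff : occ * (1 - p) <= vac * p by nra.
have occE : occ * (1 - p) = \sum_(S : {set T} | u \in S) (F S)%:R * bern S * (1 - p).
  rewrite /occ big_distrl /= big_mkcond [RHS]big_mkcond /=; apply: eq_bigr => S _.
  by case: (F S); case: (u \in S); rewrite /= ?mulr1 ?mulr0 ?mul0r ?mul1r.
have vacE : vac * p = \sum_(S : {set T} | u \notin S) (F S)%:R * bern S * p.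
  rewrite /vac big_distrl /= big_mkcond [RHS]big_mkcond /=; apply: eq_bigr => S _.
  by case: (F S); case: (u \in S); rewrite /= ?mulr1 ?mulr0 ?mul0r ?mul1r.
rewrite occE vacE (reindex_onto (fun S => u |: S) (fun S => S :\ u)) /=; last first.
  by move=> S uS; rewrite setD1K.
rewrite (eq_bigl (fun S : {set T} => u \notin S)) => [|S]; last first.
  rewrite setU11 /=; have [uS|uS] := boolP (u \in S); last by rewrite setU1K ?eqxx.
  by apply/negbTE/eqP => E; move: uS; rewrite -E setD11.
apply: ler_sum => S uS; rewrite -mulrA bern_setU1 // mulrA ler_wpM2r //.
case FuS: (F (u |: S)); first by rewrite (F_del S uS FuS).
by rewrite mul0r mulr_ge0 ?ler0n ?bern_ge0.
Qed.

End ProductBernoulli.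

Section OccupationProbability.
Variables (R : realType) (lam : R).
Hypothesis lam_gt0 : 0 < lam.

Lemma occ_prob_gt0 : 0 < occ_prob lam.
Proof. by rewrite divr_gt0 // addr_gt0. Qed.

Lemma occ_prob_lt1 : occ_prob lam < 1.
Proof. by rewrite ltr_pdivrMr ?addr_gt0 // mul1r ltrDr. Qed.

Lemma occ_probE : occ_prob lam = lam * (1 - occ_prob lam).
Proof. by rewrite /occ_prob; field; rewrite lt0r_neq0 // addr_gt0. Qed.

Lemma occ_prob_sqr_le (d : nat) :
  lam <= (2 * Num.sqrt (expR 1) * d%:R - 1)^-1 ->
  (d * d.+1)%:R * occ_prob lam ^+ 2 <= 4^-1.
Proof.
move=> lam_small; set s := Num.sqrt (expR 1 : R); set p := occ_prob lam; set D : R := d%:R.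
have x_gt0 : 0 < 2 * s * D - 1 by rewrite -invr_gt0 (lt_le_trans lam_gt0).
have s_ge0 : 0 <= s := sqrtr_ge0 _.
have s2 : s ^+ 2 = expR 1 by rewrite sqr_sqrtr // expR_ge0.
have e_ge2 : 2 <= expR 1 :> R by have := expR_ge1Dx (1 : R); rewrite -[1 + 1]/2.
have p_ge0 : 0 <= p := ltW occ_prob_gt0.
have D_ge1 : 1 <= D.
  rewrite /D ler1n lt0n; apply: contraTneq x_gt0 => d0.
  by rewrite /D d0 mulr0 sub0r oppr_gt0 ltr10.
have lam1_gt0 : 0 < 1 + lam by rewrite addr_gt0.
have pE : p * (1 + lam) = lam by rewrite /p /occ_prob mulfVK // lt0r_neq0.
have lamx : lam * (2 * s * D - 1) <= 1 by rewrite -ler_pdivlMr // div1r.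
(* The hypothesis on lam says exactly that p <= 1 / (2 sqrt(e) d). *)
have sDp : 2 * s * D * p <= 1.
  by rewrite -(ler_pM2r lam1_gt0) mul1r -[X in X <= _]mulrA pE; lra.
have sDp2 : 4 * expR 1 * (D * p) ^+ 2 <= 1.
  rewrite -s2 (_ : 4 * s ^+ 2 * (D * p) ^+ 2 = (2 * s * D * p) ^+ 2); last by ring.
  have sDp_ge0 : 0 <= 2 * s * D * p.
    by apply: mulr_ge0 => //; apply: mulr_ge0; [apply: mulr_ge0|]; lra.
  by rewrite expr_le1.
have Dp2 : 8 * (D * p) ^+ 2 <= 1 by have := sqr_ge0 (D * p); nra.
rewrite natrM -natr1 -/D; have := sqr_ge0 p; nra.
Qed.

End OccupationProbability.

Section PartialRejectionSampling.
Variables (R : realType) (T : finType) (e : rel T) (lam : R).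
Hypotheses (e_sym : symmetric e) (e_irr : irreflexive e) (lam_gt0 : 0 < lam).

Local Notation p := (occ_prob lam).
Local Notation d := (max_degree e).
Local Notation B := (nonisolated e).
Local Notation N := (cnbhd e).

Let p_ge0 : 0 <= p. Proof. exact/ltW/occ_prob_gt0. Qed.
Let p_le1 : p <= 1. Proof. exact/ltW/occ_prob_lt1. Qed.

Lemma prs_stepE S S' : prs_step e lam S S' = resample p (N (B S)) S S'.
Proof.
rewrite /prs_step indep_nonisolated resample_setE //.
by case: eqP => [->|_]; rewrite ?cnbhd0 ?resample0 // resampleE.
Qed.

Fixpoint prs_density (t : nat) (A' : {set T}) : R :=
  if t is t'.+1 then
    \sum_A prs_density t' A * bern_on p (N A) A * (B (rewind e A A') == A)%:R
  else 1.

Lemma prs_density_ge0 t A : 0 <= prs_density t A.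
Proof.
elim: t A => [|t IH] A' //=; apply: sumr_ge0 => A _.
by rewrite !mulr_ge0 ?ler0n // prodr_ge0 // => i _; apply: bern_pmf_ge0.
Qed.

Lemma prs_distE t S : prs_dist e lam t S = bern p S * prs_density t (B S).
Proof.
elim: t S => [|t IH] S' /=; first by rewrite mulr1 bernE.
have step S : prs_dist e lam t S * prs_step e lam S S' =
  bern p S' * (prs_density t (B S) * bern_on p (N (B S)) (B S) *
               (S == rewind e (B S) S')%:R).
  rewrite IH prs_stepE mulrAC bern_resample setI_cnbhd_nonisolated //; ring.
under eq_bigr do rewrite step.
rewrite -big_distrr /= (sum_fiber_eq (nonisolated e) (rewind e ^~ S')
  (fun A => prs_density t A * bern_on p (N A) A)); congr (_ * _).
by apply: eq_bigr => A _; rewrite -nonisolated_rewind.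
Qed.

Lemma prs_dist_ge0 t S : 0 <= prs_dist e lam t S.
Proof. by rewrite prs_distE mulr_ge0 ?bern_ge0 ?prs_density_ge0. Qed.

Lemma prs_dist_sum1 t : \sum_S prs_dist e lam t S = 1.
Proof.
elim: t => [|t IH] /=.
  by rewrite -(resample_sum1 p [set: T] set0); apply: eq_bigr => S _; rewrite resampleT bernE.
rewrite exchange_big /= -[RHS]IH; apply: eq_bigr => S _.
by rewrite -big_distrr /=; under eq_bigr do rewrite prs_stepE; rewrite resample_sum1 mulr1.
Qed.

Lemma sum_prs_dist_by_nonisolated t (G : {set T} -> R) :
  \sum_S prs_dist e lam t S * G S =
  \sum_A prs_density t A * \sum_(S | B S == A) bern p S * G S.
Proof.
under eq_bigr do rewrite prs_distE.
rewrite (partition_big (nonisolated e) predT) //=; apply: eq_bigr => A _.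
by rewrite big_distrr; apply: eq_bigr => S /eqP ->; rewrite mulrAC mulrC.
Qed.

Definition expected_bad (t : nat) : R := \sum_S prs_dist e lam t S * #|B S|%:R.

Lemma expected_bad_ge0 t : 0 <= expected_bad t.
Proof. by apply: sumr_ge0 => S _; rewrite mulr_ge0 ?prs_dist_ge0 ?ler0n. Qed.

Lemma sum_pairs_touching_le (X : {set T}) (K : R) : 0 <= K ->
  \sum_v \sum_u (e v u && ((v \in X) || (u \in X)))%:R * K <= (2 * d * #|X|)%:R * K.
Proof.
move=> K_ge0; under eq_bigr do rewrite -big_distrl /=.
rewrite -big_distrl /= ler_wpM2r //; under eq_bigr do rewrite -natr_sum.
by rewrite -natr_sum ler_nat card_pairs_touching.
Qed.

Lemma expected_resample_nonisolated (X S : {set T}) : B S \subset X ->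
  \sum_S' resample p X S S' * #|B S'|%:R <=
  \sum_v \sum_u (e v u && ((v \in X) || (u \in X)))%:R *
                (occ_marginal p X S v * occ_marginal p X S u).
Proof.
move=> BX.
have pairE v u :
    (e v u && ((v \in X) || (u \in X)))%:R * (occ_marginal p X S v * occ_marginal p X S u) =
    \sum_S' resample p X S S' * [&& e v u, (v \in X) || (u \in X), v \in S' & u \in S']%:R.
  have [evu|_] := boolP (e v u); last by rewrite mul0r big1 // => S' _; rewrite mulr0.
  have vu : v != u by apply: contraTneq evu => ->; rewrite e_irr.
  rewrite -resample_pair // big_distrr /=; apply: eq_bigr => S' _.
  by case: (_ || _); rewrite /= ?mul1r ?mul0r ?mulr0.
under [X in _ <= X]eq_bigr do under eq_bigr do rewrite pairE.
under [X in _ <= X]eq_bigr do rewrite exchange_big /=.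
rewrite [X in _ <= X]exchange_big /=; apply: ler_sum => S' _.
have [->|nz] := eqVneq (resample p X S S') 0.
  by rewrite mul0r; apply: sumr_ge0 => v _; apply: sumr_ge0 => u _; rewrite mul0r.
have agree i : i \notin X -> (i \in S') = (i \in S).
  by move=> iX; apply/eqP; apply: contraNT nz => /(resample_eq0 p iX) ->.
under eq_bigr do rewrite -big_distrr /=.
rewrite -big_distrr /= ler_wpM2l ?resample_ge0 //; under eq_bigr do rewrite -natr_sum.
by rewrite -natr_sum ler_nat (card_nonisolated_touching BX agree).
Qed.

Lemma bern_occupied_given_nonisolated (A : {set T}) u : u \notin A ->
  \sum_(S | B S == A) bern p S * (u \in S)%:R <= p * \sum_(S | B S == A) bern p S.
Proof.
move=> uA; apply: bern_occupied_le => // S uS /eqP BuS.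
by apply/eqP; rewrite (nonisolatedU1 e_sym (u := u)) ?BuS.
Qed.

Lemma bern_marginal_pair (A : {set T}) v u : (v \in N A) || (u \in N A) ->
  \sum_(S | B S == A) bern p S * (occ_marginal p (N A) S v * occ_marginal p (N A) S u)
  <= p ^+ 2 * \sum_(S | B S == A) bern p S.
Proof.
have outside x : x \notin N A -> x \notin A by apply: contra => xA; rewrite inE xA.
rewrite /occ_marginal; case vN: (v \in N A); case uN: (u \in N A) => //= _.
- by rewrite -big_distrl /= mulrC expr2.
- under eq_bigr do rewrite mulrCA.
  rewrite -big_distrr /= expr2 -mulrA ler_wpM2l //.
  exact: bern_occupied_given_nonisolated (outside _ (negbT uN)).
- under eq_bigr do rewrite [_%:R * p]mulrC mulrCA.
  rewrite -big_distrr /= expr2 -mulrA ler_wpM2l //.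
  exact: bern_occupied_given_nonisolated (outside _ (negbT vN)).
Qed.

Lemma expected_round_given_nonisolated (A : {set T}) :
  \sum_(S | B S == A) bern p S * \sum_S' resample p (N A) S S' * #|B S'|%:R
  <= (2 * d * d.+1)%:R * p ^+ 2 * (#|A|%:R * \sum_(S | B S == A) bern p S).
Proof.
set M := \sum_(S | B S == A) bern p S.
have M_ge0 : 0 <= M by apply: sumr_ge0 => S _; apply: bern_ge0.
have p2M_ge0 : 0 <= p ^+ 2 * M by rewrite mulr_ge0 ?exprn_ge0.
pose c v u : R := (e v u && ((v \in N A) || (u \in N A)))%:R.
apply: (@le_trans _ _ (\sum_v \sum_u c v u * (p ^+ 2 * M))); last first.
  apply: le_trans (sum_pairs_touching_le _ p2M_ge0) _.
  rewrite (_ : (2 * d * d.+1)%:R * p ^+ 2 * (#|A|%:R * M) =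
              (2 * d * d.+1)%:R * #|A|%:R * (p ^+ 2 * M)); last by ring.
  by rewrite ler_wpM2r // -natrM ler_nat -[X in (_ <= X)%N]mulnA leq_mul2l card_cnbhd orbT.
apply: (@le_trans _ _ (\sum_(S | B S == A) bern p S * \sum_v \sum_u
    c v u * (occ_marginal p (N A) S v * occ_marginal p (N A) S u))).
  apply: ler_sum => S /eqP BS; rewrite ler_wpM2l ?bern_ge0 //.
  by apply: expected_resample_nonisolated; rewrite BS subsetUl.
under eq_bigr do rewrite big_distrr /=.
rewrite exchange_big /=; apply: ler_sum => v _.
under eq_bigr do rewrite big_distrr /=.
rewrite exchange_big /=; apply: ler_sum => u _.
under eq_bigr do rewrite mulrCA.
rewrite -big_distrr /= /c; case: (boolP (_ && _)) => [/andP [_ touch]|_] /=.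
  by rewrite !mul1r bern_marginal_pair.
by rewrite !mul0r.
Qed.

Lemma expected_bad_succ t :
  expected_bad t.+1 <= (2 * d * d.+1)%:R * p ^+ 2 * expected_bad t.
Proof.
have -> : expected_bad t.+1 =
    \sum_S prs_dist e lam t S * \sum_S' prs_step e lam S S' * #|B S'|%:R.
  rewrite /expected_bad /=; under eq_bigr do rewrite big_distrl /=.
  rewrite exchange_big /=; apply: eq_bigr => S _; rewrite big_distrr /=.
  by apply: eq_bigr => S' _; rewrite mulrA.
rewrite /expected_bad !sum_prs_dist_by_nonisolated big_distrr /=; apply: ler_sum => A _.
rewrite mulrCA ler_wpM2l ?prs_density_ge0 //.
rewrite (eq_bigr (fun S => bern p S * \sum_S' resample p (N A) S S' * #|B S'|%:R)); last first.
  by move=> S /eqP BS; under eq_bigr do rewrite prs_stepE BS.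
rewrite [X in _ <= _ * X](eq_bigr (fun S => #|A|%:R * bern p S)) => [|S /eqP ->]; last first.
  exact: mulrC.
by rewrite -big_distrr /= expected_round_given_nonisolated.
Qed.

Lemma expected_bad0 : expected_bad 0 <= (2 * d * #|T|)%:R * p ^+ 2.
Proof.
rewrite /expected_bad /= /init_dist; under eq_bigr do rewrite -bernE -(resampleT p set0).
apply: le_trans (expected_resample_nonisolated (subsetT _)) _.
have margT i : occ_marginal p [set: T] set0 i = p by rewrite /occ_marginal in_setT.
under eq_bigr do under eq_bigr do rewrite !margT -expr2.
by rewrite -cardsT sum_pairs_touching_le ?exprn_ge0.
Qed.

Lemma round_cost_le (S : {set T}) : (round_cost e S <= d.+1 * #|B S|)%N.
Proof. by rewrite /round_cost; case: ifP => // _; rewrite resample_setE // card_cnbhd. Qed.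

Lemma nonindep_mass_le t : \sum_(S | ~~ indep e S) prs_dist e lam t S <= expected_bad t.
Proof.
rewrite /expected_bad [X in _ <= X](bigID (fun S => ~~ indep e S)) /= -[X in X <= _]addr0.
apply: lerD; last by apply: sumr_ge0 => S _; rewrite mulr_ge0 ?prs_dist_ge0 ?ler0n.
apply: ler_sum => S nindS; rewrite -[X in X <= _]mulr1 ler_wpM2l ?prs_dist_ge0 //.
by rewrite ler1n card_gt0 -indep_nonisolated.
Qed.

Lemma bern_hardcore (S : {set T}) : bern p S = (1 - p) ^+ #|T| * lam ^+ #|S|.
Proof. by rewrite bernE {1}occ_probE // exprMn -(cardsC S) exprD; ring. Qed.

Lemma hardcore_Z_gt0 : 0 < hardcore_Z e lam.
Proof.
rewrite /hardcore_Z (bigD1 set0) /=; last by apply/forall_inP => x; rewrite inE.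
rewrite cards0 expr0 (lt_le_trans ltr01) // lerDl.
by apply: sumr_ge0 => S _; rewrite exprn_ge0 // ltW.
Qed.

Lemma prs_dist_indep t (I : {set T}) : indep e I ->
  prs_dist e lam t I =
  lam ^+ #|I| / hardcore_Z e lam * (1 - \sum_(S | ~~ indep e S) prs_dist e lam t S).
Proof.
move=> indI; have B0 S : indep e S -> B S = set0 by rewrite indep_nonisolated => /eqP.
have mass := prs_dist_sum1 t; rewrite (bigID (indep e)) /= in mass.
have indep_mass : \sum_(S | indep e S) prs_dist e lam t S =
                  (1 - p) ^+ #|T| * hardcore_Z e lam * prs_density t set0.
  rewrite /hardcore_Z big_distrr big_distrl /=; apply: eq_bigr => S indS.
  by rewrite prs_distE B0 // bern_hardcore.
rewrite -mass addrK indep_mass prs_distE B0 // bern_hardcore.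
by field; rewrite lt0r_neq0 // hardcore_Z_gt0.
Qed.

Section SmallFugacity.
Hypothesis lam_small : lam <= (2 * Num.sqrt (expR 1) * d%:R - 1)^-1.

Lemma expected_bad_halves t : expected_bad t.+1 <= 2^-1 * expected_bad t.
Proof.
apply: le_trans (expected_bad_succ t) _; rewrite ler_wpM2r ?expected_bad_ge0 //.
by have := occ_prob_sqr_le lam_gt0 lam_small; rewrite -mulnA natrM -mulrA; lra.
Qed.

Lemma expected_bad_geometric t : expected_bad t <= geometric (expected_bad 0) 2^-1 t.
Proof.
elim: t => [|t IH]; first by rewrite /geometric /= expr0 mulr1.
apply: le_trans (expected_bad_halves t) _.
by rewrite /geometric /= exprS mulrCA ler_wpM2l.
Qed.

Lemma sum_expected_bad t : \sum_(i < t) expected_bad i <= 2 * expected_bad 0.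
Proof.
suff : \sum_(i < t) expected_bad i + 2 * expected_bad t <= 2 * expected_bad 0.
  by have := expected_bad_ge0 t; lra.
elim: t => [|t IH]; first by rewrite big_ord0 add0r.
by rewrite big_ord_recr /=; have := expected_bad_halves t; lra.
Qed.

Lemma expected_cost_le t : expected_cost e lam t <= 2 * #|T|%:R.
Proof.
have cost i : \sum_S prs_dist e lam i S * (round_cost e S)%:R <= d.+1%:R * expected_bad i.
  rewrite /expected_bad big_distrr /=; apply: ler_sum => S _.
  by rewrite mulrCA ler_wpM2l ?prs_dist_ge0 // -natrM ler_nat round_cost_le.
have work : \sum_(i < t) \sum_S prs_dist e lam i S * (round_cost e S)%:R
            <= d.+1%:R * (2 * ((2 * d * #|T|)%:R * p ^+ 2)).
  apply: (@le_trans _ _ (\sum_(i < t) d.+1%:R * expected_bad i)).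
    by apply: ler_sum => i _; apply: cost.
  rewrite -big_distrr /= ler_wpM2l // (le_trans (sum_expected_bad t)) //.
  by rewrite ler_wpM2l // expected_bad0.
have := occ_prob_sqr_le lam_gt0 lam_small; have n_ge0 : 0 <= #|T|%:R :> R by [].
move: work; rewrite /expected_cost !natrM; nra.
Qed.

Local Open Scope classical_set_scope.

Lemma nonindep_mass_cvg :
  (fun t => \sum_(S | ~~ indep e S) prs_dist e lam t S) @ \oo --> 0.
Proof.
apply: (squeeze_cvgr (f := fun=> 0) (h := geometric (expected_bad 0) 2^-1)).
- apply: nearW => t; rewrite sumr_ge0 => [|S _]; last exact: prs_dist_ge0.
  exact: le_trans (nonindep_mass_le t) (expected_bad_geometric t).
- exact: cvg_cst.
- by apply: cvg_geometric; rewrite ger0_norm; lra.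
Qed.

Lemma prs_dist_cvg (I : {set T}) : indep e I ->
  (fun t => prs_dist e lam t I) @ \oo --> lam ^+ #|I| / hardcore_Z e lam.
Proof.
move=> indI; rewrite (funext (fun t => prs_dist_indep t indI)) -[X in _ --> X]mulr1.
apply: cvgMr; rewrite -[X in _ --> X]subr0.
by apply: cvgB; [exact: cvg_cst | exact: nonindep_mass_cvg].
Qed.

End SmallFugacity.

End PartialRejectionSampling.

Local Open Scope classical_set_scope.

Theorem theorem36 (R : realType) :
  (forall (T : finType) (e : rel T) (d : nat) (lam : R),
     simple_graph e -> max_degree e = d ->
     0 < lam -> lam <= (2 * Num.sqrt (expR 1) * d%:R - 1)^-1 ->
     forall I : {set T}, indep e I ->
       (fun t => prs_dist e lam t I) @ \oo --> lam ^+ #|I| / hardcore_Z e lam)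
  /\
  (exists C : R, 0 < C /\
     forall (T : finType) (e : rel T) (d : nat) (lam : R),
       simple_graph e -> max_degree e = d ->
       0 < lam -> lam <= (2 * Num.sqrt (expR 1) * d%:R - 1)^-1 ->
       forall t : nat, expected_cost e lam t <= C * #|T|%:R).
Proof.
split=> [T e d lam [e_sym e_irr] <- lam_gt0 lam_small I indI|].
  exact: prs_dist_cvg.
exists 2; split=> [|T e d lam [e_sym e_irr] <- lam_gt0 lam_small t]; first by [].
exact: expected_cost_le.
Qed.
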